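(* Let $\lambda\in Y^{++}$ and let $(\mu_n)_{n\in\mathbb N}$ be a sequence in $W^v\lambda$ with $l(w_{\mu_n})\to+\infty$. Then $\mu_n-\lambda\in Q^\vee$ for all $n$ and $h(\mu_n-\lambda)\to-\infty$.
   Context: $I$ finite, $A$ a generalized Cartan matrix, $Y$ a free $\mathbb Z$-module of finite rank with free family $(\alpha_i^\vee)_{i\in I}$ and $\alpha_i\in\mathrm{Hom}(Y,\mathbb Z)$ with $\alpha_j(\alpha_i^\vee)=a_{i,j}$; $\mathbb A=Y\otimes\mathbb R$; $r_i(v)=v-\alpha_i(v)\alpha_i^\vee$; $W^v=\langle r_i\rangle$ with length $l$; $Q^\vee=\bigoplus\mathbb Z\alpha_i^\vee$; $C^v_f=\{\alpha_i>0\ \forall i\}$, $\mathcal T=\bigcup_w w\overline{C^v_f}$, $Y^+=Y\cap\mathcal T$, $Y^{++}=Y\cap\overline{C^v_f}$. For $x=\sum_i x_i\alpha_i^\vee\in Q^\vee$, $h(x)=\sum_i x_i$. For $\mu\in Y^+$, $w_\mu$ denotes the element $w\in W^v$ of minimal length such that $w^{-1}\mu\in\overline{C^v_f}$. *)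

From HB Require Import structures.
From mathcomp Require Import all_boot all_order all_algebra.
Set Implicit Arguments. Unset Strict Implicit. Unset Printing Implicit Defensive.
Import Order.TTheory GRing.Theory Num.Theory.
Local Open Scope ring_scope.

(* Y is modelled as 'rV[int]_r (free Z-module of rank r);
   a form alpha in Hom(Y,Z) is a column vector, evaluated by ev. *)
Definition ev (r : nat) (a : 'cV[int]_r) (y : 'rV[int]_r) : int := (y *m a) 0 0.

Definition cartan (I : finType) (r : nat) (alpha : I -> 'cV[int]_r)
  (alphav : I -> 'rV[int]_r) (i j : I) : int := ev (alpha j) (alphav i).

Definition is_gcm (I : finType) (A : I -> I -> int) : Prop :=
  [/\ forall i, A i i = 2,
      forall i j, i != j -> A i j <= 0
    & forall i j, A i j = 0 <-> A j i = 0].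

Definition free_family (I : finType) (r : nat) (alphav : I -> 'rV[int]_r) : Prop :=
  forall c : I -> int, \sum_(i : I) c i *: alphav i = 0 -> forall i, c i = 0.

Definition refl (I : finType) (r : nat) (alpha : I -> 'cV[int]_r)
  (alphav : I -> 'rV[int]_r) (i : I) (y : 'rV[int]_r) : 'rV[int]_r :=
  y - ev (alpha i) y *: alphav i.

(* the element r_{i1} ... r_{ik} of W^v represented by the word [:: i1; ...; ik] *)
Definition act (I : finType) (r : nat) (alpha : I -> 'cV[int]_r)
  (alphav : I -> 'rV[int]_r) (w : seq I) (y : 'rV[int]_r) : 'rV[int]_r :=
  foldr (fun i z => refl alpha alphav i z) y w.

(* two words define the same element of W^v (equality of linear maps,
   tested on the standard basis of Y, which spans A = Y (x) R) *)
Definition sameW (I : finType) (r : nat) (alpha : I -> 'cV[int]_r)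
  (alphav : I -> 'rV[int]_r) (w1 w2 : seq I) : bool :=
  [forall k : 'I_r, act alpha alphav w1 (delta_mx 0 k)
                    == act alpha alphav w2 (delta_mx 0 k)].

Lemma lenW_ex (I : finType) (r : nat) (alpha : I -> 'cV[int]_r)
  (alphav : I -> 'rV[int]_r) (w : seq I) :
  exists n, [exists t : n.-tuple I, sameW alpha alphav t w].
Proof.
exists (size w); apply/existsP; exists (in_tuple w).
by apply/forallP => k; rewrite /=.
Qed.

Definition lenW (I : finType) (r : nat) (alpha : I -> 'cV[int]_r)
  (alphav : I -> 'rV[int]_r) (w : seq I) : nat :=
  ex_minn (lenW_ex alpha alphav w).

Definition dominant (I : finType) (r : nat) (alpha : I -> 'cV[int]_r)
  (y : 'rV[int]_r) : bool := [forall i : I, 0 <= ev (alpha i) y].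

(* w (a word) represents w_mu: w^{-1} mu in closure(C^v_f) and w has minimal
   length among such elements. (The inverse of r_{i1}...r_{ik} is the reversed word.) *)
Definition is_w_mu (I : finType) (r : nat) (alpha : I -> 'cV[int]_r)
  (alphav : I -> 'rV[int]_r) (mu : 'rV[int]_r) (w : seq I) : Prop :=
  dominant alpha (act alpha alphav (rev w) mu) /\
  forall w' : seq I, dominant alpha (act alpha alphav (rev w') mu) ->
    (lenW alpha alphav w <= lenW alpha alphav w')%N.

Definition coroot_coords (I : finType) (r : nat) (alphav : I -> 'rV[int]_r)
  (x : 'rV[int]_r) (c : I -> int) : Prop :=
  x = \sum_(i : I) c i *: alphav i.

From HB Require Import structures.
From mathcomp Require Import all_boot all_order all_algebra.
From mathcomp Require Import ring zify.
Set Implicit Arguments. Unset Strict Implicit. Unset Printing Implicit Defensive.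
Import Order.TTheory GRing.Theory Num.Theory.
Local Open Scope ring_scope.

(* For dominant lambda and w in W^v, lambda - w lambda is a nonnegative combination of
   simple coroots: peeling off the last letter of a reduced word,
   lambda - w r_i lambda = (lambda - w lambda) + alpha_i(lambda) w alpha_i^vee, and
   w alpha_i^vee >= 0 whenever l(w r_i) > l(w).  This positivity of roots is proved as in
   Humphreys (Thm. 5.4) by pushing letters of w into the dihedral subgroup generated by
   the last two candidate letters, where it is an explicit computation depending on
   a_{s s'} a_{s' s}, which is 0, 1, 2, 3 (finite dihedral group) or at least 4.
   Conversely, while mu is not dominant, a simple reflection r_i with alpha_i(mu) < 0
   strictly lowers the height of lambda - mu, which never becomes negative; so a word of
   length at most h(lambda - mu) brings mu into the closed fundamental chamber, and
   l(w_mu) <= h(lambda - mu).  Hence l(w_{mu_n}) -> +oo forces h(mu_n - lambda) -> -oo. *)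

Lemma det_1_sub_mulmx (R : comNzRingType) (n : nat) (a : 'cV[R]_n) (b : 'rV[R]_n) :
  \det (1%:M - a *m b) = 1 - (b *m a) 0 0.
Proof.
pose M := block_mx (1%:M : 'M_n) a b (1%:M : 'M_1).
pose L := block_mx (1%:M : 'M_n) (- a) 0 (1%:M : 'M_1).
have detL : \det L = 1 by rewrite det_ublock !det1 mulr1.
have LM : L *m M = block_mx (1%:M - a *m b) 0 b 1%:M.
  by rewrite mulmx_block !mul1mx !mul0mx !add0r mulmx1 mulNmx subrr.
have ML : M *m L = block_mx 1%:M 0 b (1%:M - b *m a).
  by rewrite mulmx_block !mulmx1 !mulmx0 !addr0 mul1mx mulmxN addNr addrC.
have := congr1 determinant LM; rewrite det_mulmx detL mul1r det_lblock det1 mulr1 => <-.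
have := congr1 determinant ML; rewrite det_mulmx detL mulr1 det_lblock det1 mul1r => ->.
by rewrite det_mx11 !mxE.
Qed.

Fixpoint alt (b : bool) (n : nat) : seq bool :=
  if n is n'.+1 then rcons (alt (~~ b) n') b else [::].

Lemma size_alt b n : size (alt b n) = n.
Proof. by elim: n b => [|n IH] b //=; rewrite size_rcons IH. Qed.

Lemma alt_add b m n : alt b (m + n) = alt (b (+) odd n) m ++ alt b n.
Proof.
elim: n b => [|n IH] b; first by rewrite addn0 addbF cats0.
by rewrite addnS /= IH rcons_cat; congr (alt _ _ ++ _); case: b; case: (odd n).
Qed.

Section KacMoody.
Variables (I : finType) (r : nat) (alpha : I -> 'cV[int]_r) (alphav : I -> 'rV[int]_r).

Local Notation actw := (act alpha alphav).
Local Notation len := (lenW alpha alphav).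

Lemma evD (a : 'cV[int]_r) x y : ev a (x + y) = ev a x + ev a y.
Proof. by rewrite /ev mulmxDl mxE. Qed.

Lemma evZ (a : 'cV[int]_r) c x : ev a (c *: x) = c * ev a x.
Proof. by rewrite /ev -scalemxAl mxE. Qed.

Lemma evB (a : 'cV[int]_r) x y : ev a (x - y) = ev a x - ev a y.
Proof. by rewrite /ev mulmxBl !mxE. Qed.

Lemma ev0 (a : 'cV[int]_r) : ev a 0 = 0.
Proof. by rewrite /ev mul0mx mxE. Qed.

Definition reflmx i : 'M[int]_r := 1%:M - alpha i *m alphav i.

Definition actmx (w : seq I) : 'M[int]_r := foldr (fun i M => M *m reflmx i) 1%:M w.

Lemma refl_mulmx i y : refl alpha alphav i y = y *m reflmx i.
Proof.
by rewrite /refl /reflmx mulmxBr mulmx1 mulmxA [y *m alpha i]mx11_scalar mul_scalar_mx.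
Qed.

Lemma act_mulmx w y : actw w y = y *m actmx w.
Proof. by elim: w => [|i w IH] /=; rewrite ?mulmx1 // refl_mulmx IH mulmxA. Qed.

Lemma sameW_actmx w1 w2 : sameW alpha alphav w1 w2 = (actmx w1 == actmx w2).
Proof.
apply/forallP/eqP => [same|e k]; last by rewrite !act_mulmx e.
by apply/row_matrixP => k; rewrite !rowE -!act_mulmx; apply/eqP.
Qed.

Lemma eq_act w1 w2 y : actmx w1 = actmx w2 -> actw w1 y = actw w2 y.
Proof. by move=> e; rewrite !act_mulmx e. Qed.

Lemma act_cat w1 w2 y : actw (w1 ++ w2) y = actw w1 (actw w2 y).
Proof. by rewrite /act foldr_cat. Qed.

Lemma actmx_cat w1 w2 : actmx (w1 ++ w2) = actmx w2 *m actmx w1.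
Proof. by elim: w1 => [|i w1 IH] /=; rewrite ?mulmx1 // IH mulmxA. Qed.

Lemma actD w x y : actw w (x + y) = actw w x + actw w y.
Proof. by rewrite !act_mulmx mulmxDl. Qed.

Lemma actZ w c x : actw w (c *: x) = c *: actw w x.
Proof. by rewrite !act_mulmx scalemxAl. Qed.

Lemma actB w x y : actw w (x - y) = actw w x - actw w y.
Proof. by rewrite !act_mulmx mulmxBl. Qed.

Definition qplus (x : 'rV[int]_r) :=
  exists c : I -> int, (forall i, 0 <= c i) /\ x = \sum_i c i *: alphav i.

Lemma qplus0 : qplus 0.
Proof. by exists (fun=> 0); split=> //; rewrite big1 // => i _; rewrite scale0r. Qed.

Lemma qplusD x y : qplus x -> qplus y -> qplus (x + y).
Proof.
move=> [c [c_ge0 ->]] [d [d_ge0 ->]]; exists (fun i => c i + d i); split.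
  by move=> i; rewrite addr_ge0.
by rewrite -big_split; apply: eq_bigr => i _; rewrite scalerDl.
Qed.

Lemma qplusZ a x : 0 <= a -> qplus x -> qplus (a *: x).
Proof.
move=> a_ge0 [c [c_ge0 ->]]; exists (fun i => a * c i); split.
  by move=> i; rewrite mulr_ge0.
by rewrite scaler_sumr; apply: eq_bigr => i _; rewrite scalerA.
Qed.

Lemma qplus_coroot i : qplus (alphav i).
Proof.
exists (fun j => (j == i)%:R); split=> [j|]; first by case: (j == i).
rewrite (bigD1 i) //= eqxx scale1r big1 ?addr0 // => j /negbTE ->.
by rewrite scale0r.
Qed.

Hypothesis gcm : is_gcm (cartan alpha alphav).

Lemma cartan_diag i : ev (alpha i) (alphav i) = 2.
Proof. by case: gcm => diag _ _; apply: diag. Qed.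

Lemma reflK i : involutive (refl alpha alphav i).
Proof.
move=> y; rewrite {1}/refl evB evZ cartan_diag /refl -addrA -scaleNr -scalerBl.
by rewrite [_ - _](_ : _ = 0) ?scale0r ?addr0 //; ring.
Qed.

Lemma actK w : cancel (actw w) (actw (rev w)).
Proof. by elim: w => [|i w IH] y //=; rewrite rev_cons -cats1 act_cat /= reflK IH. Qed.

Lemma revK_act w : cancel (actw (rev w)) (actw w).
Proof. by move=> y; rewrite -{1}(revK w) actK. Qed.

Lemma actmx_cat_ii w i : actmx (w ++ [:: i; i]) = actmx w.
Proof. by apply/row_matrixP => k; rewrite !rowE -!act_mulmx act_cat /= reflK. Qed.

Lemma det_actmx w : \det (actmx w) = (-1) ^+ size w.
Proof.
elim: w => [|i w IH] /=; first by rewrite det1.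
by rewrite det_mulmx IH det_1_sub_mulmx -/(ev _ _) cartan_diag exprS mulrC.
Qed.

Lemma reduced_word_exists w : exists t : seq I, size t = len w /\ actmx t = actmx w.
Proof.
rewrite /lenW; case: ex_minnP => m /existsP [t same] _.
by exists t; split; [rewrite size_tuple | apply/eqP; rewrite -sameW_actmx].
Qed.

Lemma lenW_min w t : actmx t = actmx w -> (len w <= size t)%N.
Proof.
move=> e; rewrite /lenW; case: ex_minnP => m _; apply.
by apply/existsP; exists (in_tuple t); rewrite sameW_actmx /= e.
Qed.

Lemma lenW_le_size w : (len w <= size w)%N.
Proof. exact: lenW_min. Qed.

Lemma eq_lenW w1 w2 : actmx w1 = actmx w2 -> len w1 = len w2.
Proof.
move=> e; have [t1 [s1 e1]] := reduced_word_exists w1.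
have [t2 [s2 e2]] := reduced_word_exists w2.
apply/anti_leq/andP; split; first by rewrite -s2 lenW_min // e2.
by rewrite -s1 lenW_min // e1.
Qed.

Lemma eq_lenW_catr w1 w2 x : actmx w1 = actmx w2 -> len (w1 ++ x) = len (w2 ++ x).
Proof. by move=> e; apply: eq_lenW; rewrite !actmx_cat e. Qed.

Lemma lenW_cat w1 w2 : (len (w1 ++ w2) <= len w1 + len w2)%N.
Proof.
have [t1 [<- e1]] := reduced_word_exists w1; have [t2 [<- e2]] := reduced_word_exists w2.
by rewrite -size_cat lenW_min // !actmx_cat e1 e2.
Qed.

Lemma odd_lenW w : odd (len w) = odd (size w).
Proof.
have [t [<- e]] := reduced_word_exists w.
by apply: (@signr_inj int); rewrite !signr_odd -!det_actmx e.
Qed.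

Lemma lenW_rcons_le w i : (len (w ++ [:: i]) <= (len w).+1)%N.
Proof. by apply: leq_trans (lenW_cat _ _) _; rewrite -addn1 leq_add2l (lenW_le_size [:: i]). Qed.

Lemma lenW_rcons w i : len (w ++ [:: i]) = (len w).+1 \/ (len (w ++ [:: i])).+1 = len w.
Proof.
have up := lenW_rcons_le w i.
have down : (len w <= (len (w ++ [:: i])).+1)%N.
  by rewrite -(eq_lenW (actmx_cat_ii w i)) -(cat1s i [:: i]) catA lenW_rcons_le.
have : len (w ++ [:: i]) != len w.
  apply/eqP => eq; have := odd_lenW (w ++ [:: i]).
  by rewrite eq odd_lenW size_cat addn1 /=; case: (odd _).
lia.
Qed.

Lemma lenW_eq0 w : len w = 0%N -> actmx w = 1%:M.
Proof.
move=> len0; have [t [st <-]] := reduced_word_exists w.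
by case: t st; rewrite // len0.
Qed.

Lemma reduced_prefix t i : len (rcons t i) = (size t).+1 -> len t = size t.
Proof.
move=> red; apply/anti_leq; rewrite lenW_le_size /=.
by have := lenW_rcons_le t i; rewrite cats1 red ltnS.
Qed.

Section Rank2.
Variables s s' : I.
Hypothesis neq_ss' : s != s'.

Definition letter (b : bool) := if b then s else s'.
Let P := ev (alpha s) (alphav s').
Let Q := ev (alpha s') (alphav s).

(* One letter acting on y + c alpha_s^vee + d alpha_s'^vee, recorded on (c, d);
   X and Z stand for alpha_s(y) and alpha_s'(y). *)
Definition coord_step (X Z : int) (b : bool) (cd : int * int) : int * int :=
  if b then (- cd.1 - X - cd.2 * P, cd.2) else (cd.1, - cd.2 - Z - cd.1 * Q).

Lemma act_letters w y c d :
  actw (map letter w) (y + c *: alphav s + d *: alphav s') =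
  y + (foldr (coord_step (ev (alpha s) y) (ev (alpha s') y)) (c, d) w).1 *: alphav s
    + (foldr (coord_step (ev (alpha s) y) (ev (alpha s') y)) (c, d) w).2 *: alphav s'.
Proof.
elim: w => [|b w IH] //=; rewrite IH.
set c1 := (foldr _ _ w).1; set d1 := (foldr _ _ w).2.
case: b; rewrite /= /refl !evD !evZ ?cartan_diag -/P -/Q.
  rewrite [- c1 - _ - _](_ : _ = c1 - (ev (alpha s) y + c1 * 2 + d1 * P)); last by ring.
  by rewrite scalerBl addrAC -[y + _ - _]addrA.
rewrite [- d1 - _ - _](_ : _ = d1 - (ev (alpha s') y + c1 * Q + d1 * 2)); last by ring.
by rewrite scalerBl -addrA.
Qed.

Lemma act_letters_coroot w :
  actw (map letter w) (alphav s) =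
  (foldr (coord_step 0 0) (1, 0) w).1 *: alphav s
    + (foldr (coord_step 0 0) (1, 0) w).2 *: alphav s'.
Proof.
have e : alphav s = 0 + 1 *: alphav s + 0 *: alphav s'.
  by rewrite scale1r scale0r add0r addr0.
by rewrite [in LHS]e act_letters !ev0 add0r.
Qed.

Lemma actmx_letters w1 w2 :
  (forall X Z, foldr (coord_step X Z) (0, 0) w1 = foldr (coord_step X Z) (0, 0) w2) ->
  actmx (map letter w1) = actmx (map letter w2).
Proof.
move=> same; apply/row_matrixP => k; rewrite !rowE -!act_mulmx.
have -> : delta_mx 0 k = delta_mx 0 k + 0 *: alphav s + 0 *: alphav s'.
  by rewrite !scale0r !addr0.
by rewrite !act_letters same.
Qed.

Lemma cartan_rank2 : [/\ P <= 0, Q <= 0 & (P == 0) = (Q == 0)].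
Proof.
case: gcm => _ offdiag sym; split; first by apply: offdiag; rewrite eq_sym.
  exact: offdiag.
by apply/eqP/eqP => /sym.
Qed.

Lemma reduced_letters_alt w b : len (map letter (rcons w b)) = (size w).+1 ->
  rcons w b = alt b (size w).+1.
Proof.
elim/last_ind: w b => [|w a IH] b //= red.
rewrite size_rcons in red *.
have ab : a = ~~ b.
  case: (a =P b) => [ab|]; last by clear red; case: a; case: b.
  move: red; rewrite ab !map_rcons -!cats1 -catA /= (eq_lenW (actmx_cat_ii _ _)).
  by move=> red; have := lenW_le_size (map letter w); rewrite red size_map; lia.
have red' : len (map letter (rcons w a)) = (size w).+1.
  apply/anti_leq/andP; split.
    by have := lenW_le_size (map letter (rcons w a)); rewrite size_map size_rcons.
  by have := lenW_rcons_le (map letter (rcons w a)) (letter b); rewrite cats1 -map_rcons red.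
by rewrite (IH a red') ab.
Qed.

Lemma braid_bound m k :
  (forall X Z, foldr (coord_step X Z) (0, 0) (alt true m.+1) =
               foldr (coord_step X Z) (0, 0) (alt false m.-1)) -> (0 < m)%N ->
  len (map letter (alt true k.+1)) = k.+1 -> (k < m)%N.
Proof.
move=> /actmx_letters braid m_gt0 red; rewrite ltnNge; apply/negP => le_mk.
have split_k : k.+1 = ((k - m) + m.+1)%N by rewrite addnS subnK.
have : actmx (map letter (alt true k.+1)) =
       actmx (map letter (alt (true (+) odd m.+1) (k - m)) ++ map letter (alt false m.-1)).
  by rewrite split_k alt_add map_cat !actmx_cat braid.
move/eq_lenW; rewrite red => e.
have := lenW_le_size (map letter (alt (true (+) odd m.+1) (k - m)) ++ map letter (alt false m.-1)).
rewrite -e size_cat !size_map !size_alt; lia.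
Qed.

Lemma alt_coroot_coords_infinite : 4 <= P * Q -> forall k,
  let cd := foldr (coord_step 0 0) (1, 0) (alt false k) in
  [/\ 0 <= cd.1, 0 <= cd.2, (odd k -> 2 * cd.1 <= - P * cd.2)
    & (~~ odd k -> 2 * cd.2 <= - Q * cd.1)].
Proof.
case: cartan_rank2 => P_le0 Q_le0 _ PQ_ge4.
elim=> [|k IH]; first by split=> //=; rewrite mulr0 mulr1 oppr_ge0.
rewrite -add1n alt_add foldr_cat /=.
move: IH => /=; case: (foldr (coord_step 0 0) (1, 0) (alt false k)) => c d /=.
by rewrite /coord_step; case: (odd k) => /= [[? ? /(_ isT) ? _]|[? ? _ /(_ isT) ?]]; split=> //; nia.
Qed.

(* For a_{s s'} a_{s' s} = 0, 1, 2, 3 the braid relation of order m = 2, 3, 4, 6 bounds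
   the length of reduced alternating words, leaving finitely many coordinates to check. *)
Lemma reduced_alt_coroot_coords k : len (map letter (alt true k.+1)) = k.+1 ->
  0 <= (foldr (coord_step 0 0) (1, 0) (alt false k)).1 /\
  0 <= (foldr (coord_step 0 0) (1, 0) (alt false k)).2.
Proof.
move=> red; case: cartan_rank2 => P_le0 Q_le0 PQ0.
have finite m :
    (forall X Z, foldr (coord_step X Z) (0, 0) (alt true m.+1) =
                 foldr (coord_step X Z) (0, 0) (alt false m.-1)) -> (0 < m)%N ->
    (forall j, (j < m)%N -> 0 <= (foldr (coord_step 0 0) (1, 0) (alt false j)).1 /\
                            0 <= (foldr (coord_step 0 0) (1, 0) (alt false j)).2) ->
    0 <= (foldr (coord_step 0 0) (1, 0) (alt false k)).1 /\
    0 <= (foldr (coord_step 0 0) (1, 0) (alt false k)).2.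
  by move=> braid m_gt0; apply; apply: braid_bound braid m_gt0 red.
have : 4 <= P * Q \/ (P = 0 /\ Q = 0) \/ (P = -1 /\ Q = -1) \/ (P = -1 /\ Q = -2)
    \/ (P = -2 /\ Q = -1) \/ (P = -1 /\ Q = -3) \/ (P = -3 /\ Q = -1).
  have P0Q0 : P = 0 -> Q = 0 by move=> P0; apply/eqP; rewrite -PQ0 P0.
  have Q0P0 : Q = 0 -> P = 0 by move=> Q0; apply/eqP; rewrite PQ0 Q0.
  nia.
case=> [PQ_ge4|[[eP eQ]|[[eP eQ]|[[eP eQ]|[[eP eQ]|[[eP eQ]|[eP eQ]]]]]]];
  [by case: (alt_coroot_coords_infinite PQ_ge4 k) | apply: (finite 2%N) | apply: (finite 3%N)
  | apply: (finite 4%N) | apply: (finite 4%N) | apply: (finite 6%N) | apply: (finite 6%N)].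
all: rewrite // /coord_step eP eQ /=.
all: first [by move=> X Z; congr pair; ring | by case=> [|[|[|[|[|[|]]]]]]].
Qed.

Lemma act_alt_coroot k : len (map letter (alt true k.+1)) = k.+1 ->
  exists a b : int, [/\ 0 <= a, 0 <= b &
    actw (map letter (alt false k)) (alphav s) = a *: alphav s + b *: alphav s'].
Proof.
move=> /reduced_alt_coroot_coords; rewrite act_letters_coroot.
by set cd := foldr _ _ _ => -[a_ge0 b_ge0]; exists cd.1, cd.2.
Qed.

End Rank2.

Lemma act_coroot_len0 w s : len w = 0%N -> qplus (actw w (alphav s)).
Proof. by move=> /lenW_eq0 w1; rewrite act_mulmx w1 mulmx1; apply: qplus_coroot. Qed.

Section Exchange.
Variables (N : nat) (w : seq I) (s s' : I).
Hypothesis IH : forall v t, (len v <= N)%N -> len (v ++ [:: t]) = (len v).+1 ->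
  qplus (actw v (alphav t)).
Hypotheses (len_w : len w = N.+1) (ascent_s : len (w ++ [:: s]) = N.+2)
  (descent_s' : len (w ++ [:: s']) = N).

Definition dihedral_factor v u :=
  actmx (v ++ map (letter s s') u) = actmx w /\ (len v + size u)%N = N.+1.

Lemma dihedral_factor_descent v u b : dihedral_factor v u ->
  (len (v ++ [:: letter s s' b])).+1 = len v ->
  exists v', dihedral_factor v' (b :: u) /\ (len v').+1 = len v.
Proof.
move=> [vu_w len_vu] descent; have [v' [_ v'_vb]] := reduced_word_exists (v ++ [:: letter s s' b]).
have len_v' : len v' = len (v ++ [:: letter s s' b]) by apply: eq_lenW.
exists v'; split; last by rewrite len_v'.
split; last by rewrite /= addnS len_v' -len_vu -descent.
have v'b_v : actmx (v' ++ [:: letter s s' b]) = actmx v.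
  by rewrite actmx_cat v'_vb -actmx_cat -catA actmx_cat_ii.
by rewrite /= -cat1s catA actmx_cat v'b_v -actmx_cat.
Qed.

Lemma dihedral_factor_ascents : exists v u, [/\ dihedral_factor v u,
  len (v ++ [:: s]) = (len v).+1 & len (v ++ [:: s']) = (len v).+1].
Proof.
have [t [_ t_w]] := reduced_word_exists (w ++ [:: s']).
have factor0 : dihedral_factor t [:: false].
  split; last by rewrite (eq_lenW t_w) descent_s' addn1.
  by rewrite /= actmx_cat t_w -actmx_cat -catA actmx_cat_ii.
have ascents n v u : len v = n -> dihedral_factor v u -> exists v u, [/\ dihedral_factor v u,
    len (v ++ [:: s]) = (len v).+1 & len (v ++ [:: s']) = (len v).+1].
  elim/ltn_ind: n v u => n IHn v u len_v factor.
  have [a_s|d_s] := lenW_rcons v s; last first.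
    have [v' [factor' len_v']] := dihedral_factor_descent (b := true) factor d_s.
    by apply: (IHn _ _ v' _ erefl factor'); lia.
  have [a_s'|d_s'] := lenW_rcons v s'; last first.
    have [v' [factor' len_v']] := dihedral_factor_descent (b := false) factor d_s'.
    by apply: (IHn _ _ v' _ erefl factor'); lia.
  by exists v, u.
exact: ascents _ _ _ erefl factor0.
Qed.

Lemma act_coroot_qplus_of_ascents v u : dihedral_factor v u ->
  len (v ++ [:: s]) = (len v).+1 -> len (v ++ [:: s']) = (len v).+1 ->
  qplus (actw w (alphav s)).
Proof.
move=> [vu_w len_vu] a_s a_s'.
have neq_ss' : s != s' by apply/eqP => ss'; move: ascent_s; rewrite ss' descent_s'; lia.
have u_nil : u != [::].
  apply/eqP => u0; move: vu_w len_vu a_s'; rewrite u0 cats0 addn0 => vw len_v.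
  by rewrite (eq_lenW_catr _ vw) descent_s' len_v; lia.
have len_v : (len v <= N)%N by case: u u_nil len_vu {vu_w} => //= b u _; lia.
have red : len (map (letter s s') (rcons u true)) = (size u).+1.
  have := lenW_cat v (map (letter s s') (rcons u true)).
  rewrite map_rcons -cats1 catA (eq_lenW_catr _ vu_w) ascent_s.
  have := lenW_le_size (map (letter s s') u ++ [:: s]); rewrite size_cat size_map /=; lia.
have u_true_alt := reduced_letters_alt neq_ss' red.
have /rcons_inj [u_alt] : rcons u true = rcons (alt false (size u)) true := u_true_alt.
have [a [b [a_ge0 b_ge0 act_u]]] : exists a b : int, [/\ 0 <= a, 0 <= b &
    actw (map (letter s s') u) (alphav s) = a *: alphav s + b *: alphav s'].
  have red_alt : len (map (letter s s') (alt true (size u).+1)) = (size u).+1.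
    by rewrite -u_true_alt.
  by rewrite u_alt; apply: act_alt_coroot red_alt.
rewrite -(eq_act _ vu_w) act_cat act_u actD !actZ.
by apply: qplusD; apply: qplusZ => //; apply: IH.
Qed.

End Exchange.

Lemma lenW_descent w N : len w = N.+1 -> exists s, len (w ++ [:: s]) = N.
Proof.
move=> len_w; have [t [size_t t_w]] := reduced_word_exists w.
case/lastP: t size_t t_w => [|t s]; first by rewrite len_w.
rewrite size_rcons len_w => -[size_t] t_w; exists s.
have len_ws : len (w ++ [:: s]) = len t.
  by rewrite -(eq_lenW_catr _ t_w) -cats1 -catA (eq_lenW (actmx_cat_ii _ _)).
have := lenW_le_size t; have := lenW_rcons w s; rewrite len_ws size_t len_w; lia.
Qed.

Theorem act_coroot_qplus w s : len (w ++ [:: s]) = (len w).+1 -> qplus (actw w (alphav s)).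
Proof.
move: {2}(len w) (leqnn (len w)) => n; elim: n w s => [|n IHn] w s.
  by rewrite leqn0 => /eqP len_w _; apply: act_coroot_len0.
case len_w : (len w) => [|N]; first by move=> *; apply: act_coroot_len0.
rewrite ltnS => le_Nn ascent; have [s' descent] := lenW_descent len_w.
have IH v t : (len v <= N)%N -> len (v ++ [:: t]) = (len v).+1 -> qplus (actw v (alphav t)).
  by move=> le_vN; apply: IHn; apply: leq_trans le_Nn.
have [v [u [factor a_s a_s']]] := dihedral_factor_ascents len_w ascent descent.
exact: (act_coroot_qplus_of_ascents IH len_w ascent descent factor a_s a_s').
Qed.

Lemma orbit_qplus lam w : dominant alpha lam -> qplus (lam - actw w lam).
Proof.
move=> /forallP dom; have [t [size_t t_w]] := reduced_word_exists w.
rewrite -(eq_act _ t_w); have {size_t t_w} : len t = size t by rewrite size_t; apply: eq_lenW.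
elim/last_ind: t => [|t i IH] red; first by rewrite subrr; apply: qplus0.
have red_t := reduced_prefix (etrans red (size_rcons t i)).
rewrite -cats1 act_cat /= /refl actB actZ opprB addrCA addrC.
apply: qplusD; first exact: IH.
apply: qplusZ; first exact: dom.
by apply: act_coroot_qplus; rewrite cats1 red red_t size_rcons.
Qed.

Lemma coroot_sumN (c : I -> int) : - \sum_i c i *: alphav i = \sum_i (- c i) *: alphav i.
Proof. by rewrite -sumrN; apply: eq_bigr => i _; rewrite scaleNr. Qed.

Lemma refl_lowers_height lam w d : lam - actw w lam = \sum_i d i *: alphav i ->
  ~~ dominant alpha (actw w lam) ->
  exists i d', lam - actw (i :: w) lam = \sum_j d' j *: alphav j /\ \sum_j d' j < \sum_j d j.
Proof.
move=> e; rewrite negb_forall => /existsP [i]; rewrite -ltNge => neg_i.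
set x := ev (alpha i) (actw w lam) in neg_i.
exists i, (fun j => d j + (j == i)%:R * x); split.
  rewrite /= /refl opprB addrCA addrC e -/x.
  under [RHS]eq_bigr do rewrite scalerDl.
  rewrite big_split /=; congr (_ + _).
  rewrite (bigD1 i) //= eqxx mul1r big1 ?addr0 // => j /negbTE ->.
  by rewrite mul0r scale0r.
have delta : \sum_j (j == i)%:R * x = x.
  by rewrite (bigD1 i) //= eqxx mul1r big1 ?addr0 // => j /negbTE ->; rewrite mul0r.
by rewrite big_split /= delta gtrDl.
Qed.

Hypothesis free : free_family alphav.

Lemma coroot_coords_uniq (c d : I -> int) :
  \sum_i c i *: alphav i = \sum_i d i *: alphav i -> c =1 d.
Proof.
move=> e i; apply/eqP; rewrite -subr_eq0; apply/eqP; move: i; apply: free.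
under eq_bigr do rewrite scalerBl.
by rewrite sumrB e subrr.
Qed.

Lemma orbit_height_ge0 lam w d : dominant alpha lam ->
  lam - actw w lam = \sum_i d i *: alphav i -> 0 <= \sum_i d i.
Proof.
move=> /(orbit_qplus w) [c [c_ge0 ec]] ed.
by apply: sumr_ge0 => i _; rewrite -(coroot_coords_uniq (etrans (esym ec) ed)).
Qed.

Lemma dominant_word_of_height lam w d : dominant alpha lam ->
  lam - actw w lam = \sum_i d i *: alphav i ->
  exists w', dominant alpha (actw (rev w') (actw w lam)) /\ (size w')%:Z <= \sum_i d i.
Proof.
move=> dom_lam e; move: {2}(absz _) (erefl (absz (\sum_i d i))) => n.
elim/ltn_ind: n w d e => n IHn w d e height.
have ge0 := orbit_height_ge0 dom_lam e.
have [dom|nondom] := boolP (dominant alpha (actw w lam)); first by exists [::].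
have [i [d' [e' lt_d'd]]] := refl_lowers_height e nondom.
have ge0' := orbit_height_ge0 dom_lam e'.
have [|w' [dom' size_w']] := IHn _ _ (i :: w) d' e' erefl; first by rewrite -height; lia.
exists (i :: w'); split; first by rewrite rev_cons -cats1 act_cat.
by have := le_lt_trans size_w' lt_d'd; rewrite /=; lia.
Qed.

Lemma eq_act_rev w1 w2 y : actmx w1 = actmx w2 -> actw (rev w1) y = actw (rev w2) y.
Proof. by move=> e; rewrite -{1}(revK_act w2 y) -(eq_act _ e) actK. Qed.

Lemma is_w_mu_exists mu w0 : dominant alpha (actw (rev w0) mu) ->
  exists w, is_w_mu alpha alphav mu w /\ (len w <= size w0)%N.
Proof.
move=> dom0.
have ex_n : exists n, [exists t : n.-tuple I, dominant alpha (actw (rev t) mu)].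
  by exists (size w0); apply/existsP; exists (in_tuple w0).
case: (ex_minnP ex_n) => m /existsP [t dom_t] min_m.
have len_t : (len t <= m)%N by have := lenW_le_size t; rewrite size_tuple.
exists t; split; last by apply: leq_trans len_t (min_m _ _); apply/existsP; exists (in_tuple w0).
split=> // w' dom'; apply: leq_trans len_t _.
have [t' [size_t' t'_w']] := reduced_word_exists w'.
rewrite -size_t'; apply: min_m; apply/existsP; exists (in_tuple t').
by rewrite /= (eq_act_rev _ t'_w').
Qed.

End KacMoody.

Unset Implicit Arguments.
Set Strict Implicit.

Theorem mainTheorem9 (I : finType) (r : nat)
  (alpha : I -> 'cV[int]_r) (alphav : I -> 'rV[int]_r)
  (hgcm : is_gcm (cartan alpha alphav))
  (hfree : free_family alphav)
  (lambda : 'rV[int]_r) (hlam : dominant alpha lambda)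
  (mu : nat -> 'rV[int]_r)
  (hmu : forall n, exists w : seq I, mu n = act alpha alphav w lambda)
  (hlen : forall M : nat, exists N : nat, forall n : nat, (N <= n)%N ->
            forall w : seq I, is_w_mu alpha alphav (mu n) w ->
              (M <= lenW alpha alphav w)%N) :
  (forall n, exists c : I -> int, coroot_coords alphav (mu n - lambda) c) /\
  (forall M : int, exists N : nat, forall n : nat, (N <= n)%N ->
     forall c : I -> int, coroot_coords alphav (mu n - lambda) c ->
       \sum_(i : I) c i <= M).
Proof.
split=> [n | M].
  have [w ->] := hmu n; have [c [_ ec]] := orbit_qplus hgcm w hlam.
  by exists (fun i => - c i); rewrite /coroot_coords -opprB ec coroot_sumN.
have [N hN] := hlen (absz M); exists N => n le_Nn c mu_c.
have [w mu_w] := hmu n.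
have e : lambda - act alpha alphav w lambda = \sum_i (- c i) *: alphav i.
  by rewrite -mu_w -opprB mu_c coroot_sumN.
have [w0 [dom0 size_w0]] := dominant_word_of_height hgcm hfree hlam e.
rewrite -mu_w in dom0; have [w1 [w1_mu len_w1]] := is_w_mu_exists hgcm dom0.
rewrite -[leLHS]opprK -lerNl; apply: le_trans (ler_norm _) _.
rewrite normrN -abszE -sumrN; apply: le_trans size_w0; rewrite lez_nat.
exact: leq_trans (hN n le_Nn w1 w1_mu) len_w1.
Qed.
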